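(* Let $G=(V,E)$ be a directed graph, $s\neq t$ vertices and $k$ an integer with $1\le k\le 4$. Then the edge set of the upper-bound graph $SPG^u_k(s,t)$ equals the edge set of $SPG_k(s,t)$.
   Context: A path from $x$ to $y$ in $G$ is a vertex sequence $x=v_0,\dots,v_m=y$ with $(v_{i-1},v_i)\in E$; its length is $m$ and $V(p)$, $E(p)$ are its vertex and edge sets. A simple path has no repeated vertex. $SPG_k(s,t)$ is the subgraph of $G$ formed by the union of vertex sets and edge sets of all simple paths from $s$ to $t$ of length at most $k$. For a vertex $u$ and integer $l\ge 0$, $EV^*_l(s,u)$ exists iff there is at least one simple path from $s$ to $u$ of length at most $l$ not containing $t$, and then $EV^*_l(s,u)$ is the intersection of $V(p)$ over all such paths. Symmetrically, $EV^*_l(v,t)$ exists iff there is at least one simple path from $v$ to $t$ of length at most $l$ not containing $s$, and then it is the intersection of $V(p)$ over all such paths. The upper-bound graph $SPG^u_k(s,t)$ is the subgraph of $G$ whose edges are exactly those $e(u,v)\in E$ for which there exist integers $k_f,k_b\ge 0$ such that $EV^*_{k_f}(s,u)$ and $EV^*_{k_b}(v,t)$ exist, $k_f+1+k_b\le k$, and $EV^*_{k_f}(s,u)\cap EV^*_{k_b}(v,t)=\emptyset$. *)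

From mathcomp Require Import all_boot.
Set Implicit Arguments. Unset Strict Implicit. Unset Printing Implicit Defensive.

(* A path from x to y is the vertex sequence x :: p (v_0 = x, ..., v_m = y)
   with consecutive vertices joined by edges. *)
Definition is_path (V : finType) (E : rel V) (x y : V) (p : seq V) : bool :=
  path E x p && (last x p == y).

Definition path_len (V : Type) (p : seq V) : nat := size p.

Definition path_vertices (V : Type) (x : V) (p : seq V) : seq V := x :: p.
Definition path_edges (V : Type) (x : V) (p : seq V) : seq (V * V) :=
  zip (x :: p) p.

Definition is_simple_path (V : finType) (E : rel V) (x y : V) (p : seq V) : bool :=
  is_path E x y p && uniq (path_vertices x p).

Definition SPG_edge (V : finType) (E : rel V) (k : nat) (s t u v : V) : Prop :=
  exists p : seq V, [/\ is_simple_path E s t p, path_len p <= k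
                       & (u, v) \in path_edges s p].

Definition fwd_path (V : finType) (E : rel V) (s t u : V) (l : nat) (p : seq V) : bool :=
  [&& is_simple_path E s u p, path_len p <= l & t \notin path_vertices s p].

Definition bwd_path (V : finType) (E : rel V) (s t v : V) (l : nat) (p : seq V) : bool :=
  [&& is_simple_path E v t p, path_len p <= l & s \notin path_vertices v p].

Definition EVf_exists (V : finType) (E : rel V) (s t u : V) (l : nat) : Prop :=
  exists p, fwd_path E s t u l p.
Definition EVb_exists (V : finType) (E : rel V) (s t v : V) (l : nat) : Prop :=
  exists p, bwd_path E s t v l p.

(* EV*_l(s,u) = intersection of V(p) over all forward candidate paths *)
Definition EVf (V : finType) (E : rel V) (s t u : V) (l : nat) (x : V) : Prop :=
  forall p, fwd_path E s t u l p -> x \in path_vertices s p.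
(* EV*_l(v,t) = intersection of V(p) over all backward candidate paths *)
Definition EVb (V : finType) (E : rel V) (s t v : V) (l : nat) (x : V) : Prop :=
  forall p, bwd_path E s t v l p -> x \in path_vertices v p.

Definition SPGu_edge (V : finType) (E : rel V) (k : nat) (s t u v : V) : Prop :=
  E u v /\
  exists kf kb : nat,
    [/\ EVf_exists E s t u kf, EVb_exists E s t v kb, kf + 1 + kb <= k
      & ~ (exists x, EVf E s t u kf x /\ EVb E s t v kb x)].

From mathcomp Require Import all_boot zify.
From Stdlib Require Import Classical.

Set Implicit Arguments.
Unset Strict Implicit.
Unset Printing Implicit Defensive.

(* An edge (u,v) of SPG_k lies on a simple s-t path, which splits at the edge
   into a forward path to u and a backward path from v with disjoint vertex
   sets; these contain EV*(s,u) and EV*(v,t) respectively.  Conversely, if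
   EV*(s,u) and EV*(v,t) are disjoint, then v is avoided by some forward path
   p and u by some backward path q, and p (u,v) q is an s-t walk of length at
   most k.  A vertex shared by p and q can be none of s, t, u, v, so it is
   interior to both, which forces length at least 2 + 1 + 2 = 5; for k <= 4
   the walk is therefore a simple path. *)

Lemma interior_size_gt1 (T : eqType) (a x : T) (p : seq T) :
  x \in a :: p -> x != a -> x != last a p -> 1 < size p.
Proof.
case: p => [|y [|z r]] //=; rewrite !inE; first by move=> ->.
by case/orP=> ->; rewrite ?orbT.
Qed.

Lemma mem_path_edges (T : eqType) (x u v : T) (p : seq T) :
  (u, v) \in path_edges x p <->
  exists p1 p2, p = p1 ++ v :: p2 /\ last x p1 = u.
Proof.
split.
- elim: p x => [|y p IHp] x //=.
  rewrite in_cons => /orP [/eqP [-> ->]|/IHp [p1 [p2 [-> <-]]]].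
  + by exists [::], p.
  + by exists (y :: p1), p2.
- move=> [p1 [p2 [-> <-]]]; rewrite /path_edges.
  elim: p1 x => [|y p1 IHp1] x /=; first by rewrite mem_head.
  by rewrite in_cons IHp1 orbT.
Qed.

Section SimplePaths.

Variables (V : finType) (E : rel V).

Lemma simple_path_cat (x y u v : V) (p q : seq V) : last x p = u ->
  is_simple_path E x y (p ++ v :: q) =
  [&& is_simple_path E x u p, E u v, is_simple_path E v y q
    & [disjoint v :: q & x :: p]].
Proof.
move=> lp; rewrite /is_simple_path /is_path /path_vertices.
rewrite -cat_cons cat_uniq cat_path last_cat lp disjoint_has eqxx andbT.
by rewrite [path E u _]/= -!andbA; do !bool_congr.
Qed.

Variables (s t : V).

Lemma EVf_target (u : V) (l : nat) : EVf E s t u l u.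
Proof. by move=> p /and3P [/andP [/andP [_ /eqP <-] _] _ _]; rewrite mem_last. Qed.

Lemma EVb_source (v : V) (l : nat) : EVb E s t v l v.
Proof. by move=> q _; rewrite mem_head. Qed.

Lemma fwd_path_avoiding (u x : V) (l : nat) : ~ EVf E s t u l x ->
  exists p, fwd_path E s t u l p /\ x \notin path_vertices s p.
Proof.
move=> /not_all_ex_not [p not_fp]; have [fp xp] := imply_to_and _ _ not_fp.
by exists p; split=> //; apply/negP.
Qed.

Lemma bwd_path_avoiding (v x : V) (l : nat) : ~ EVb E s t v l x ->
  exists q, bwd_path E s t v l q /\ x \notin path_vertices v q.
Proof.
move=> /not_all_ex_not [q not_bq]; have [bq xq] := imply_to_and _ _ not_bq.
by exists q; split=> //; apply/negP.
Qed.

Lemma short_fwd_bwd_disjoint (u v : V) (kf kb : nat) (p q : seq V) :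
  fwd_path E s t u kf p -> bwd_path E s t v kb q ->
  v \notin s :: p -> u \notin v :: q -> kf + 1 + kb <= 4 ->
  [disjoint v :: q & s :: p].
Proof.
move=> /and3P [/andP [/andP [_ /eqP lp] _] szp tp].
move=> /and3P [/andP [/andP [_ /eqP lq] _] szq sq] vp uq k4.
rewrite disjoint_has; apply/hasPn => x xq; apply/negP => xp.
have xs : x != s by apply: contraNneq sq => <-.
have xt : x != t by apply: contraNneq tp => <-.
have xu : x != u by apply: contraNneq uq => <-.
have xv : x != v by apply: contraNneq vp => <-.
have p_gt1 : 1 < size p by apply: (interior_size_gt1 xp); rewrite ?lp.
have q_gt1 : 1 < size q by apply: (interior_size_gt1 xq); rewrite ?lq.
rewrite /path_len in szp szq; lia.
Qed.

Lemma SPG_edge_SPGu_edge (k : nat) (u v : V) :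
  SPG_edge E k s t u v -> SPGu_edge E k s t u v.
Proof.
move=> [p [sp szp /mem_path_edges [p1 [p2 [ep lu]]]]].
move: sp szp; rewrite ep (simple_path_cat _ _ _ lu) => /and4P [sp1 Euv sp2 dis] szp.
have tp2 : t \in v :: p2 by move: sp2 => /andP [/andP [_ /eqP <-] _]; rewrite mem_last.
have fp1 : fwd_path E s t u (size p1) p1.
  by rewrite /fwd_path sp1 leqnn (disjointFr dis tp2).
have bp2 : bwd_path E s t v (size p2) p2.
  by rewrite /bwd_path sp2 leqnn (disjointFl dis (mem_head s p1)).
split=> //; exists (size p1), (size p2); rewrite /EVf_exists /EVb_exists; split.
- by exists p1.
- by exists p2.
- by move: szp; rewrite /path_len size_cat /= addn1 addSn -addnS.
- move=> [x [/(_ p1 fp1) xp1 /(_ p2 bp2) xp2]].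
  by rewrite (disjointFr dis xp2) in xp1.
Qed.

Lemma SPGu_edge_SPG_edge (k : nat) (u v : V) : k <= 4 ->
  SPGu_edge E k s t u v -> SPG_edge E k s t u v.
Proof.
move=> k4 [Euv [kf [kb [_ _ szk disjEV]]]].
have [p [fp vp]] : exists p, fwd_path E s t u kf p /\ v \notin s :: p.
  by apply: fwd_path_avoiding => EVf_v; apply: disjEV; exists v;
     split; last exact: EVb_source.
have [q [bq uq]] : exists q, bwd_path E s t v kb q /\ u \notin v :: q.
  by apply: bwd_path_avoiding => EVb_u; apply: disjEV; exists u;
     split; first exact: EVf_target.
have dis := short_fwd_bwd_disjoint fp bq vp uq (leq_trans szk k4).
move: fp bq => /and3P [sp szp _] /and3P [sq szq _].
have lp : last s p = u by case/andP: sp => /andP [_ /eqP].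
exists (p ++ v :: q); split.
- by rewrite (simple_path_cat _ _ _ lp) sp Euv sq dis.
- rewrite /path_len size_cat /= addnS; apply: leq_trans szk.
  by rewrite addn1 addSn ltnS; exact: leq_add szp szq.
- by apply/mem_path_edges; exists p, q.
Qed.

End SimplePaths.

Theorem theorem4p8 (V : finType) (E : rel V) (s t : V) (k : nat) :
  s != t -> 1 <= k <= 4 ->
  forall u v : V, SPGu_edge E k s t u v <-> SPG_edge E k s t u v.
Proof.
move=> _ /andP [_ k4] u v; split.
- exact: SPGu_edge_SPG_edge.
- exact: SPG_edge_SPGu_edge.
Qed.
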